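(* Let $X,S\in\operatorname{rep}(Q)$, let $R$ be $R_d$ or $R_{d,\mathrm{str}}$, and let $V\subseteq\Phi(X)$, $W\subseteq\Phi(S)$ be $R$-submodules. Then the canonical map $\operatorname{Ext}^1_R(\Phi(S),\Phi(X))\to\operatorname{Ext}^1_R(W,\Phi(X)/V)$, induced by the inclusion $W\hookrightarrow\Phi(S)$ and the projection $\Phi(X)\twoheadrightarrow\Phi(X)/V$, is surjective.
   Context: $K=\mathbb{C}$; $Q$ a finite quiver, $\operatorname{rep}(Q)$ its finite-dimensional representations. For $d\geqslant1$, $Q_d$ has vertices $v(Q)\times\{1,\dots,d\}$, arrows $(i,r)\to(i,r+1)$ ($r\leqslant d-1$) and $(i,r)\to(j,r)$ for each arrow $i\to j$ of $Q$, $r\in\{1,\dots,d\}$. For $d\geqslant2$, $Q_{d,\mathrm{str}}$ has the same vertices and vertical arrows and arrows $(i,r)\to(j,r-1)$ for each arrow $i\to j$, $r\in\{2,\dots,d\}$. $R_d=KQ_d/I$, $R_{d,\mathrm{str}}=KQ_{d,\mathrm{str}}/I$ with $I$ the ideal identifying all paths with equal source and target. $\Phi(X)_{(i,r)}=X_i$, identity maps on vertical arrows, $X_{i\to j}$ on arrows coming from $i\to j$. *)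

(* Representations of a finite quiver Q, and modules over the
   bound quiver algebras R_d = K Q_d / I and R_{d,str} = K Q_{d,str} / I,
   realised as representations of Q_d (resp. Q_{d,str}) satisfying the
   commutativity relations. *)
From HB Require Import structures.
From mathcomp Require Import all_boot all_algebra.
Set Implicit Arguments.
Unset Strict Implicit.
Unset Printing Implicit Defensive.
Import GRing.Theory.
Local Open Scope ring_scope.

Record quiver := Quiver {
  qv : finType;
  qa : finType;
  qsrc : qa -> qv;
  qtgt : qa -> qv }.

Record rep (K : fieldType) (Q : quiver) := Rep {
  rsp : qv Q -> vectType K;
  rmap : forall a : qa Q, {linear rsp (qsrc a) -> rsp (qtgt a)} }.

(* A module over R = R_d (str = false) or R = R_{d,str} (str = true).
   Levels are 0-based: the vertex (i, r) of the paper (1 <= r <= d) is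
   (i, r-1) here; only levels r < d are meaningful (spaces/maps at levels
   >= d are ignored by every notion below).
   - mv i r   : vertical arrow (i,r) -> (i,r+1)            (used for r+1 < d)
   - mh a r   : arrow coming from a : i -> j,
                (i, r) -> (j, r)      if str = false         (used for r < d)
                (i, r+1) -> (j, r)    if str = true          (used for r+1 < d)
   - mcomm    : the relations of I: the two paths around each square
                formed by a vertical arrow and arrows coming from a agree. *)
Record rmod (K : fieldType) (Q : quiver) (d : nat) (str : bool) := RMod {
  msp : qv Q -> nat -> lmodType K;
  mv : forall (i : qv Q) (r : nat), {linear msp i r -> msp i r.+1};
  mh : forall (a : qa Q) (r : nat),
         {linear msp (qsrc a) (r + str) -> msp (qtgt a) r};
  mcomm : forall (a : qa Q) (r : nat) (x : msp (qsrc a) (r + str)),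
    (r.+1 + str < d)%N ->
    mv (qtgt a) r (mh a r x) = mh a r.+1 (mv (qsrc a) (r + str) x) }.

Section Modules.
Variables (K : fieldType) (Q : quiver) (d : nat) (str : bool).
Local Notation rmodQ := (rmod K Q d str).

Definition vmap (M N : rmodQ) :=
  forall (i : qv Q) (r : nat), {linear msp M i r -> msp N i r}.

Definition is_hom (M N : rmodQ) (f : vmap M N) : Prop :=
  (forall i r x, (r.+1 < d)%N -> f i r.+1 (mv M i r x) = mv N i r (f i r x)) /\
  (forall a r x, (r + str < d)%N ->
     f (qtgt a) r (mh M a r x) = mh N a r (f (qsrc a) (r + str) x)).

Definition hom_injective (M N : rmodQ) (f : vmap M N) : Prop :=
  forall i r, (r < d)%N -> injective (f i r).

Definition hom_surjective (M N : rmodQ) (f : vmap M N) : Prop :=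
  forall i r, (r < d)%N -> forall y, exists x, f i r x = y.

Definition hom_eq (M N : rmodQ) (f g : vmap M N) : Prop :=
  forall i r x, (r < d)%N -> f i r x = g i r x.

Definition hom_comp (L M N : rmodQ) (g : vmap M N) (f : vmap L M) : vmap L N :=
  fun i r => (g i r \o f i r)%FUN.

Definition ses (A B C : rmodQ) (f : vmap A B) (g : vmap B C) : Prop :=
  [/\ is_hom f, is_hom g, hom_injective f, hom_surjective g &
      forall i r, (r < d)%N -> forall y, g i r y = 0 <-> exists x, y = f i r x].

(* Yoneda description of the canonical map
     Ext^1_R(C, A) -> Ext^1_R(C', A'),  [xi] |-> p_* h^* [xi]
   induced by p : A -> A' and h : C' -> C.
   [xi'] = p_* h^* [xi]  iff there is an extension eta of C' by A together
   with a morphism of extensions eta -> xi of the form (id_A, u, h)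
   (so [eta] = h^*[xi]) and a morphism eta -> xi' of the form (p, w, id_C')
   (so [xi'] = p_*[eta]). *)
Definition ext_maps_to (A A' C C' : rmodQ) (p : vmap A A') (h : vmap C' C)
    (B : rmodQ) (f : vmap A B) (g : vmap B C)
    (B' : rmodQ) (f' : vmap A' B') (g' : vmap B' C') : Prop :=
  exists (G : rmodQ) (f2 : vmap A G) (g2 : vmap G C'),
    ses f2 g2 /\
    exists (u : vmap G B) (w : vmap G B'),
      [/\ is_hom u, is_hom w,
          hom_eq (hom_comp u f2) f /\ hom_eq (hom_comp g u) (hom_comp h g2) &
          hom_eq (hom_comp w f2) (hom_comp f' p) /\ hom_eq (hom_comp g' w) g2].

Definition ext_map_surjective (A A' C C' : rmodQ) (p : vmap A A')
    (h : vmap C' C) : Prop :=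
  forall (B' : rmodQ) (f' : vmap A' B') (g' : vmap B' C'), ses f' g' ->
  exists (B : rmodQ) (f : vmap A B) (g : vmap B C),
    ses f g /\ ext_maps_to p h f g f' g'.

End Modules.

Definition Phi_sp (K : fieldType) (Q : quiver) (X : rep K Q)
  (i : qv Q) (r : nat) : lmodType K := rsp X i.

Definition Phi (K : fieldType) (Q : quiver) (d : nat) (str : bool)
  (X : rep K Q) : rmod K Q d str :=
  @RMod K Q d str (Phi_sp X)
    (fun i r => @idfun (rsp X i))
    (fun a r => rmap X a)
    (fun a r x _ => erefl).

From Stdlib Require Import Reals Classical.
From HB Require Import structures.
From mathcomp Require Import all_boot all_algebra complex Rstruct zify.
Set Implicit Arguments.
Unset Strict Implicit.
Unset Printing Implicit Defensive.
Import GRing.Theory.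
Local Open Scope ring_scope.

(* Given 0 -> N -> B' -> W -> 0 with N = Phi(X)/V and W <= Phi(S), the required
   extension of Phi(S) by Phi(X) lives on Phi(X) + Phi(S), with arrow maps
   [[X_a, H_a], [0, S_a]].  First choose linear maps T_(i,r) : S_i -> B'_(i,r)
   lifting the inclusions W_(i,r) -> S_i through B' -> W and commuting with the
   vertical arrows.  On each arrow a, T fails to be a homomorphism by a map into
   the image of N, and H_a lifts this defect through Phi(X) -> N -> B'.  As the
   vertical maps of Phi(S) are identities, the images j(W_(i,r)) increase with
   r, so T and H_a can be built level by level, each time extending a lift
   already fixed on a subspace of a finite-dimensional space.  The intermediate
   extension of W by Phi(X) is the analogous twisted sum on Phi(X) + W. *)

Section LinearLifts.
Variable K : fieldType.
Implicit Types (V : vectType K) (W M : lmodType K).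

Lemma vspace_of_closed V (P : V -> Prop) :
  P 0 -> (forall a x y, P x -> P y -> P (a *: x + y)) ->
  exists U : {vspace V}, forall x, x \in U <-> P x.
Proof.
move=> P0 P_lin.
suff grow_subspace : forall n (U : {vspace V}), (\dim {:V} - \dim U <= n)%N ->
    (forall x, x \in U -> P x) ->
    exists U : {vspace V}, forall x, x \in U <-> P x.
  by apply: (grow_subspace _ 0%VS (leq_subr _ _)) => x; rewrite memv0 => /eqP ->.
elim=> [|n IHn] U codim_U UP.
  have U_full : U = fullv by apply/eqP; rewrite eqEdim subvf -subn_eq0 -leqn0.
  by exists U => x; split=> [/UP|_]; last by rewrite U_full memvf.
have [[x [Px xU]]|P_in_U] := classic (exists x, P x /\ x \notin U); last first.
  exists U => x; split=> [/UP //|Px]; apply: contraT => xU.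
  by case: P_in_U; exists x.
have U_lt : (\dim U < \dim (U + <[x]>))%N.
  rewrite (ltn_leqif (dimv_leqif_sup (addvSl U <[x]>))).
  apply: contra xU => /subvP; apply.
  exact: subvP (addvSr U _) _ (memv_line x).
apply: (IHn (U + <[x]>)%VS).
  by move: codim_U (dimvS (subvf (U + <[x]>))) U_lt; lia.
move=> _ /memv_addP[u /UP Pu [_ /vlineP[k ->] ->]].
by rewrite addrC; apply: P_lin.
Qed.

Lemma linear_image_vspace V W (j : {linear W -> V}) :
  exists U : {vspace V}, forall x, x \in U <-> exists w, x = j w.
Proof.
apply: vspace_of_closed; first by exists 0; rewrite linear0.
by move=> a _ _ [w1 ->] [w2 ->]; exists (a *: w1 + w2); rewrite linearP.
Qed.

Definition basis_map V M n (b : n.-tuple V) (m : 'I_n -> M) (x : V) : M :=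
  \sum_(k < n) coord b k x *: m k.

Fact basis_map_is_linear V M n (b : n.-tuple V) (m : 'I_n -> M) :
  linear (basis_map b m).
Proof.
move=> a x y; rewrite /basis_map scaler_sumr -big_split; apply: eq_bigr => k _.
by rewrite linearP scalerDl scalerA.
Qed.

HB.instance Definition _ V M n (b : n.-tuple V) (m : 'I_n -> M) :=
  GRing.isLinear.Build K V M *:%R (basis_map b m) (basis_map_is_linear b m).

Lemma linear_basis_map V M M2 n (b : n.-tuple V) (m : 'I_n -> M)
    (f : {linear M -> M2}) x :
  f (basis_map b m x) = basis_map b (f \o m) x.
Proof. by rewrite linear_sum; apply: eq_bigr => k _; rewrite linearZ. Qed.

Lemma eq_basis_map V M n (b : n.-tuple V) (m1 m2 : 'I_n -> M) :
  m1 =1 m2 -> basis_map b m1 =1 basis_map b m2.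
Proof. by move=> eq_m x; apply: eq_bigr => k _; rewrite eq_m. Qed.

Lemma basis_map_vbasis V (U : {vspace V}) x :
  x \in U -> basis_map (vbasis U) (nth 0 (vbasis U)) x = x.
Proof. by move/coord_vbasis. Qed.

Lemma linear_linv V W (j : {linear W -> V}) :
  injective j -> exists jinv : {linear V -> W}, cancel j jinv.
Proof.
move=> j_inj; have [U memU] := linear_image_vspace j.
have /fin_all_exists[w jw] :
    forall k : 'I_(\dim U), exists w, j w = (vbasis U)`_k.
  move=> k; have /memU[w ->] : (vbasis U)`_k \in U.
    by apply/vbasis_mem/mem_nth; rewrite size_tuple.
  by exists w.
exists (basis_map (vbasis U) w) => w0; apply: j_inj.
rewrite linear_basis_map (eq_basis_map _ jw).
by rewrite basis_map_vbasis //; apply/memU; exists w0.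
Qed.

Lemma vect_lift V M M2 (q : {linear M -> M2}) (phi : {linear V -> M2}) :
  (forall x, exists m, q m = phi x) ->
  exists L : {linear V -> M}, forall x, q (L x) = phi x.
Proof.
move=> phi_im; have /fin_all_exists[m qm] := fun k : 'I_(\dim {:V}) =>
  phi_im (vbasis fullv)`_k.
exists (basis_map (vbasis fullv) m) => x.
rewrite linear_basis_map (eq_basis_map _ qm).
by rewrite -linear_basis_map basis_map_vbasis ?memvf.
Qed.

Lemma lift_along_injective V W M M2 (j : {linear W -> V})
    (q : {linear M -> M2}) (eps : {linear W -> M2}) :
  injective j -> (forall w, exists m, q m = eps w) ->
  exists rho : {linear V -> M}, forall w, q (rho (j w)) = eps w.
Proof.
move=> /linear_linv[jinv jK] eps_im.
have [rho q_rho] :=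
  @vect_lift V M M2 q (eps \o jinv) (fun x => eps_im (jinv x)).
by exists rho => w; rewrite q_rho /= jK.
Qed.

Lemma extend_lift_along_injective V W0 W M M2 (j : {linear W -> V})
    (e : {linear W0 -> W}) (q : {linear M -> M2}) (eps : {linear W -> M2})
    (rho0 : {linear V -> M}) :
  injective j -> (forall w, exists m, q m = eps w) ->
  (forall w0, q (rho0 (j (e w0))) = eps (e w0)) ->
  exists rho : {linear V -> M},
    (forall w0, rho (j (e w0)) = rho0 (j (e w0))) /\
    (forall w, q (rho (j w)) = eps w).
Proof.
move=> j_inj eps_im rho0_ok.
have [L q_L] : exists L : {linear V -> M},
    forall w, q (L (j w)) = eps w - q (rho0 (j w)).
  apply: (lift_along_injective (eps := eps \- (q \o rho0 \o j))) => // w.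
  by have [m qm] := eps_im w; exists (m - rho0 (j w)); rewrite linearB qm.
have [U0 memU0] := linear_image_vspace (j \o e).
exists (rho0 \+ (L \o (idfun \- projv U0))); split=> [w0|w] /=.
  by rewrite projv_id ?subrr ?linear0 ?addr0 //; apply/memU0; exists w0.
have [w0 /= Pjw] := (memU0 _).1 (memv_proj U0 (j w)).
have -> : j w - projv U0 (j w) = j (w - e w0) by rewrite Pjw linearB.
rewrite [q (_ + _)]linearD q_L !linearB /= rho0_ok.
by rewrite opprK addrCA addNKr subrK.
Qed.
End LinearLifts.

Section PairMaps.
Variables (K : fieldType) (U1 U2 V1 V2 M : lmodType K).

Definition upper_tri_map (a : {linear U1 -> V1}) (h : {linear U2 -> V1})
    (b : {linear U2 -> V2}) (z : U1 * U2) : V1 * V2 :=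
  (a z.1 + h z.2, b z.2).

Fact upper_tri_map_is_linear a h b : linear (upper_tri_map a h b).
Proof.
move=> c x y; rewrite /upper_tri_map /= !linearP.
by congr (_, _); rewrite /= scalerDr addrACA.
Qed.

HB.instance Definition _ a h b :=
  GRing.isLinear.Build K (U1 * U2)%type (V1 * V2)%type *:%R
    (upper_tri_map a h b) (upper_tri_map_is_linear a h b).

Definition inl_pair (x : U1) : U1 * U2 := (x, 0).

Fact inl_pair_is_linear : linear inl_pair.
Proof. by move=> c x y; congr (_, _); rewrite /= ?scaler0 ?addr0. Qed.

HB.instance Definition _ :=
  GRing.isLinear.Build K U1 (U1 * U2)%type *:%R inl_pair inl_pair_is_linear.

Definition inr_pair (y : U2) : U1 * U2 := (0, y).

Fact inr_pair_is_linear : linear inr_pair.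
Proof. by move=> c x y; congr (_, _); rewrite /= ?scaler0 ?addr0. Qed.

HB.instance Definition _ :=
  GRing.isLinear.Build K U2 (U1 * U2)%type *:%R inr_pair inr_pair_is_linear.

Definition copair (a : {linear U1 -> M}) (b : {linear U2 -> M}) (z : U1 * U2) :
  M := a z.1 + b z.2.

Fact copair_is_linear a b : linear (copair a b).
Proof. by move=> c x y; rewrite /copair /= !linearP scalerDr addrACA. Qed.

HB.instance Definition _ a b :=
  GRing.isLinear.Build K (U1 * U2)%type M *:%R
    (copair a b) (copair_is_linear a b).

End PairMaps.

Arguments inl_pair {K U1 U2}.
Arguments inr_pair {K U1 U2}.

Section TwistedSum.
Variables (K : fieldType) (Q : quiver) (d : nat) (str : bool).
Local Notation rmodQ := (rmod K Q d str).
Variables (A C : rmodQ).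
Variable theta : forall a r,
  {linear msp C (qsrc a) (r + str)%N -> msp A (qtgt a) r}.
Hypothesis theta_mv : forall a r c, (r.+1 + str < d)%N ->
  mv A (qtgt a) r (theta a r c) = theta a r.+1 (mv C (qsrc a) (r + str)%N c).

Definition twisted_sp i r : lmodType K := (msp A i r * msp C i r)%type.

Definition twisted_v i r : {linear twisted_sp i r -> twisted_sp i r.+1} :=
  upper_tri_map (mv A i r) \0 (mv C i r).

Definition twisted_h a r :
    {linear twisted_sp (qsrc a) (r + str)%N -> twisted_sp (qtgt a) r} :=
  upper_tri_map (mh A a r) (theta a r) (mh C a r).

Lemma twisted_comm a r (z : twisted_sp (qsrc a) (r + str)%N) :
    (r.+1 + str < d)%N ->
  twisted_v (qtgt a) r (twisted_h a r z) =
  twisted_h a r.+1 (twisted_v (qsrc a) (r + str)%N z).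
Proof.
case: z => x c r_lt; rewrite /twisted_v /twisted_h /= /upper_tri_map /= !addr0.
by rewrite linearD !mcomm // theta_mv.
Qed.

Definition twisted_sum : rmodQ := RMod twisted_comm.

Lemma twisted_sum_ses :
  ses (fun i r => inl_pair : {linear msp A i r -> msp twisted_sum i r})
      (fun i r => snd : {linear msp twisted_sum i r -> msp C i r}).
Proof.
split.
- split=> [i r x _|a r x _] /=;
    by rewrite /inl_pair /upper_tri_map /= !linear0 !addr0.
- by split=> [i r [x c] _|a r [x c] _].
- by move=> i r _ x y [].
- by move=> i r _ c; exists (0, c).
- move=> i r _ [x c] /=; split=> [->|[x' [_ ->]] //]; by exists x.
Qed.

Lemma copair_hom (M : rmodQ) (alpha : vmap A M) (tau : vmap C M) :
  is_hom alpha ->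
  (forall i r c, (r.+1 < d)%N ->
     tau i r.+1 (mv C i r c) = mv M i r (tau i r c)) ->
  (forall a r c, (r + str < d)%N ->
     alpha (qtgt a) r (theta a r c) + tau (qtgt a) r (mh C a r c) =
     mh M a r (tau (qsrc a) (r + str)%N c)) ->
  is_hom (fun i r =>
    copair (alpha i r) (tau i r) : {linear msp twisted_sum i r -> _}).
Proof.
move=> [alpha_v alpha_h] tau_v tau_h.
split=> [i r [x c] r_lt|a r [x c] r_lt] /=.
  by rewrite /copair /= addr0 alpha_v // tau_v // linearD.
by rewrite /copair /= !linearD alpha_h // -addrA tau_h.
Qed.

End TwistedSum.

Lemma is_hom_comp (K : fieldType) (Q : quiver) (d : nat) (str : bool)
    (L M N : rmod K Q d str) (f : vmap L M) (g : vmap M N) :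
  is_hom f -> is_hom g -> is_hom (fun i r => g i r \o f i r : {linear _ -> _}).
Proof.
move=> [f_v f_h] [g_v g_h]; split=> [i r x r_lt|a r x r_lt] /=.
  by rewrite f_v // g_v.
by rewrite f_h // g_h.
Qed.

Section ExtensionLift.
Variables (K : fieldType) (Q : quiver) (d : nat) (str : bool).
Local Notation rmodQ := (rmod K Q d str).
Variables (X S : rep K Q) (N W : rmodQ).
Variables (p : vmap (Phi d str X) N) (j : vmap W (Phi d str S)).
Hypotheses (str_lt_d : (str < d)%N) (p_hom : is_hom p)
  (p_surj : hom_surjective p) (j_hom : is_hom j) (j_inj : hom_injective j).
Variables (B' : rmodQ) (f' : vmap N B') (g' : vmap B' W).
Hypothesis ses_fg' : ses f' g'.

Lemma j_mv i r w : (r.+1 < d)%N -> j i r.+1 (mv W i r w) = j i r w.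
Proof. by move=> r_lt; rewrite j_hom.1. Qed.

Lemma j_mv_iter i r m (w : msp W i r) : (r <= m)%N -> (m < d)%N ->
  exists w', j i r w = j i m w'.
Proof.
elim: m => [|m IHm] r_le m_lt.
  by move: w; rewrite leqn0 in r_le; rewrite (eqP r_le) => w; exists w.
have [r_eq | r_ne] := eqVneq r m.+1; first by subst r; exists w.
have r_le_m : (r <= m)%N by lia.
have [w' ->] := IHm r_le_m (ltnW m_lt).
by exists (mv W i m w'); rewrite j_mv.
Qed.

Lemma vertex_section i : exists T : forall r, {linear rsp S i -> msp B' i r},
  (forall r w, (r < d)%N -> g' i r (T r (j i r w)) = w) /\
  (forall r w, (r.+1 < d)%N -> T r.+1 (j i r w) = mv B' i r (T r (j i r w))).
Proof.
have [_ g'_hom _ g'_surj _] := ses_fg'.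
suff Tm : forall m, exists T : forall r, {linear rsp S i -> msp B' i r},
    (forall r w, (r <= m)%N -> (r < d)%N -> g' i r (T r (j i r w)) = w) /\
    (forall r w, (r < m)%N -> (r.+1 < d)%N ->
       T r.+1 (j i r w) = mv B' i r (T r (j i r w))).
  have [T [T_sect T_mv]] := Tm d.
  by exists T; split=> r w r_lt;
    [exact: T_sect (ltnW r_lt) r_lt | exact: T_mv (ltnW r_lt) r_lt].
elim=> [|m [T [T_sect T_mv]]].
  have d_gt0 : (0 < d)%N by apply: leq_ltn_trans str_lt_d.
  have [T0 T0_sect] := lift_along_injective (@j_inj i 0 d_gt0)
    (q := g' i 0) (eps := idfun) (g'_surj i 0 d_gt0).
  exists (@dfwith nat (fun r => {linear rsp S i -> msp B' i r})
    (fun=> \0) 0 T0).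
  split=> // r w.
  by rewrite leqn0 => /eqP r0 _; subst r; rewrite dfwith_in.
have [m_lt | m_ge] := ltnP m.+1 d; last first.
  by exists T; split=> r w r_le r_lt; [apply: T_sect | apply: T_mv] => //; lia.
have mvT_sect w :
    g' i m.+1 (mv B' i m (T m (j i m.+1 (mv W i m w)))) = mv W i m w.
  by rewrite j_mv // g'_hom.1 // T_sect // ltnW.
have [rho [rho_mv rho_sect]] := extend_lift_along_injective (@j_inj i m.+1 m_lt)
  (e := mv W i m) (q := g' i m.+1) (eps := idfun)
  (rho0 := mv B' i m \o T m) (g'_surj i m.+1 m_lt) mvT_sect.
exists (@dfwith nat (fun r => {linear rsp S i -> msp B' i r}) T m.+1 rho).
split=> r w r_le r_lt.
  have [r_eq | r_ne] := eqVneq r m.+1; first by subst r; rewrite dfwith_in.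
  by rewrite dfwith_out 1?eq_sym // T_sect //; lia.
have [r_eq | r_ne] := eqVneq r m.
  subst r; rewrite dfwith_in dfwith_out ?gtn_eqF //.
  by rewrite -(j_mv w m_lt) rho_mv.
have [ne_r ne_r1] : m.+1 != r /\ m.+1 != r.+1 by split; lia.
by rewrite !dfwith_out // T_mv //; lia.
Qed.

Section ArrowCorrection.
Variable T : forall i r, {linear rsp S i -> msp B' i r}.
Hypothesis T_sect : forall i r w, (r < d)%N -> g' i r (T i r (j i r w)) = w.
Hypothesis T_mv : forall i r w, (r.+1 < d)%N ->
  T i r.+1 (j i r w) = mv B' i r (T i r (j i r w)).

Definition arrow_defect a r :
    {linear msp W (qsrc a) (r + str)%N -> msp B' (qtgt a) r} :=
  (mh B' a r \o T (qsrc a) (r + str)%N \o j (qsrc a) (r + str)%N)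
  \- (T (qtgt a) r \o j (qtgt a) r \o mh W a r).

Lemma arrow_defect_lift a r w : (r + str < d)%N ->
  exists x, f' (qtgt a) r (p (qtgt a) r x) = arrow_defect a r w.
Proof.
move=> r_lt; have r_lt' : (r < d)%N by lia.
have [_ [_ g'_h] _ _ exact_fg'] := ses_fg'.
have /exact_fg'[//|n ->] : g' (qtgt a) r (arrow_defect a r w) = 0.
  by rewrite /= linearB /= g'_h // !T_sect // subrr.
by have [x <-] := p_surj r_lt' n; exists x.
Qed.

Lemma arrow_defect_mv a r w : (r.+1 + str < d)%N ->
  mv B' (qtgt a) r (arrow_defect a r w) =
  arrow_defect a r.+1 (mv W (qsrc a) (r + str)%N w).
Proof.
move=> r_lt; have r_lt' : (r.+1 < d)%N by lia.
by rewrite /= linearB /= mcomm // -!T_mv // -[mh W a r.+1 _]mcomm // !j_mv.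
Qed.

Lemma arrow_correction a :
  exists H : {linear rsp S (qsrc a) -> rsp X (qtgt a)}, forall r w,
    (r + str < d)%N ->
    f' (qtgt a) r (p (qtgt a) r (H (j (qsrc a) (r + str)%N w))) =
    arrow_defect a r w.
Proof.
have [[f'_v _] _ _ _ _] := ses_fg'.
have [p_v _] := p_hom.
suff Hm m : exists H : {linear rsp S (qsrc a) -> rsp X (qtgt a)}, forall r w,
    (r <= m)%N -> (r + str < d)%N ->
    f' (qtgt a) r (p (qtgt a) r (H (j (qsrc a) (r + str)%N w))) =
    arrow_defect a r w.
  have [H H_ok] := Hm d; exists H => r w r_lt.
  by apply: H_ok => //; lia.
elim: m => [|m [H H_ok]].
  have [H H_ok] := lift_along_injective (@j_inj (qsrc a) (0 + str)%N str_lt_d)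
    (q := f' (qtgt a) 0 \o p (qtgt a) 0) (eps := arrow_defect a 0)
    (fun w => arrow_defect_lift w str_lt_d).
  by exists H => r w; rewrite leqn0 => /eqP r0 _; subst r; apply: H_ok.
have [m_lt | m_ge] := ltnP (m.+1 + str)%N d; last first.
  by exists H => r w r_le r_lt; apply: H_ok => //; lia.
have m_lt' : (m.+1 < d)%N by lia.
have H_mv w0 : f' (qtgt a) m.+1 (p (qtgt a) m.+1
      (H (j (qsrc a) (m + str).+1%N (mv W (qsrc a) (m + str)%N w0)))) =
    arrow_defect a m.+1 (mv W (qsrc a) (m + str)%N w0).
  rewrite j_mv // -arrow_defect_mv // -H_ok //; last by lia.
  exact: etrans (congr1 _ (p_v _ _ _ m_lt')) (f'_v _ _ _ m_lt').
have [rho [rho_H rho_ok]] := extend_lift_along_injective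
  (@j_inj (qsrc a) (m.+1 + str)%N m_lt) (e := mv W (qsrc a) (m + str)%N)
  (q := f' (qtgt a) m.+1 \o p (qtgt a) m.+1) (eps := arrow_defect a m.+1)
  (rho0 := H) (fun w => @arrow_defect_lift a m.+1 w m_lt) H_mv.
exists rho => r w r_le r_lt.
have [r_eq | r_ne] := eqVneq r m.+1; first by subst r; apply: rho_ok.
have [r_le' m_lt''] : (r + str <= m + str)%N /\ (m + str < d)%N by split; lia.
have [w' jw] := j_mv_iter w r_le' m_lt''.
by rewrite jw -j_mv // rho_H j_mv // -jw H_ok //; lia.
Qed.

End ArrowCorrection.

Lemma ext_lift : exists (B : rmodQ) (f : vmap (Phi d str X) B)
    (g : vmap B (Phi d str S)), ses f g /\ ext_maps_to p j f g f' g'.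
Proof.
have [f'_hom _ _ _ exact_fg'] := ses_fg'.
have [T T_spec] := fin_all_exists vertex_section.
have T_sect i := (T_spec i).1; have T_mv i := (T_spec i).2.
have [H H_spec] := fin_all_exists (arrow_correction T_sect T_mv).
pose B := @twisted_sum _ _ _ _ (Phi d str X) (Phi d str S) (fun a r => H a)
  (fun _ _ _ _ => erefl).
have Hj_mv a r c : (r.+1 + str < d)%N ->
    H a (j (qsrc a) (r + str)%N c) =
    H a (j (qsrc a) (r.+1 + str)%N (mv W (qsrc a) (r + str)%N c)).
  by move=> r_lt; rewrite j_mv.
pose G := @twisted_sum _ _ _ _ (Phi d str X) W
  (fun a r => H a \o j (qsrc a) (r + str)%N) Hj_mv.
have B_ses : ses (fun i r => inl_pair : {linear _ -> msp B i r})
    (fun i r => snd) by exact: twisted_sum_ses.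
have [inl_hom _ _ _ _] := B_ses.
exists B, (fun i r => inl_pair), (fun i r => snd); split=> //.
exists G, (fun i r => inl_pair), (fun i r => snd).
split; first exact: twisted_sum_ses.
exists (fun i r => copair inl_pair (inr_pair \o j i r)).
exists (fun i r => copair (f' i r \o p i r) (T i r \o j i r)).
split; [| | split | split].
- apply: copair_hom inl_hom _ _ => [i r w r_lt | a r c r_lt].
    by rewrite /= j_mv // /inr_pair /upper_tri_map /= addr0.
  rewrite /= /inl_pair /inr_pair /upper_tri_map /=.
  by congr (_, _); rewrite /= ?linear0 ?add0r ?addr0 // j_hom.2.
- apply: copair_hom (is_hom_comp p_hom f'_hom) _ _ => [i r w r_lt | a r c r_lt].
    by rewrite /= j_mv // T_mv.
  by rewrite /= H_spec // /= subrK.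
- by move=> i r x _; rewrite /= /copair /inl_pair /inr_pair /= linear0 addr0.
- by move=> i r [x w] _; rewrite /= /copair /inl_pair /inr_pair /= add0r.
- by move=> i r x _; rewrite /= /copair /= !linear0 addr0.
move=> i r [x w] r_lt.
have g'f' : g' i r (f' i r (p i r x)) = 0.
  by apply/exact_fg' => //; exists (p i r x).
by rewrite /= /copair /= linearD /= T_sect // g'f' add0r.
Qed.
End ExtensionLift.

(* Phi(X)/V is encoded by a surjective homomorphism p out of Phi(X), and
   W <= Phi(S) by an injective homomorphism j into Phi(S). *)
Theorem lemma3p6 (Q : quiver) (d : nat) (str : bool)
  (Hd : (0 < d)%N) (Hstr : str -> (1 < d)%N)
  (X S : rep (R[i])%C Q)
  (N : rmod (R[i])%C Q d str) (p : vmap (Phi d str X) N)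
  (Hp : is_hom p) (Hp_surj : hom_surjective p)
  (W : rmod (R[i])%C Q d str) (j : vmap W (Phi d str S))
  (Hj : is_hom j) (Hj_inj : hom_injective j) :
  ext_map_surjective p j.
Proof.
have str_lt_d : (str < d)%N by move: Hstr; case: (str) => // /(_ isT).
move=> B' f' g' ses_fg'.
exact (ext_lift str_lt_d Hp Hp_surj Hj Hj_inj ses_fg').
Qed.
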